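(* Let $\{x_k\}_{k\ge 0}$ be a log-convex sequence and define $z_n=\sum_{k=0}^{n}c(n,k)x_k$ for $n\ge 0$. Then $\{z_n\}_{n\ge 0}$ is log-convex.
   Context: $c(n,k)$ denotes the signless Stirling number of the first kind: the number of permutations of $\{1,\dots,n\}$ with exactly $k$ cycles, with $c(0,0)=1$ and $c(n,k)=0$ unless $0\le k\le n$. A sequence $a_0,a_1,\ldots$ of nonnegative real numbers is log-convex if $a_{k-1}a_{k+1}\ge a_k^2$ for all $k\ge 1$. *)

From mathcomp Require Import all_boot all_order all_algebra.
Set Implicit Arguments. Unset Strict Implicit. Unset Printing Implicit Defensive.
Import Order.TTheory GRing.Theory Num.Theory.

(* Signless Stirling numbers of the first kind c(n,k): number of permutations
   of {1..n} with exactly k cycles. *)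
Fixpoint stirling1 (n k : nat) : nat :=
  match n, k with
  | 0, 0 => 1
  | 0, _.+1 => 0
  | _.+1, 0 => 0
  | n'.+1, k'.+1 => n' * stirling1 n' k'.+1 + stirling1 n' k'
  end.

Local Open Scope ring_scope.

Definition log_convex (R : realFieldType) (a : nat -> R) : Prop :=
  (forall k, 0 <= a k) /\ (forall k, (0 < k)%N -> a k ^+ 2 <= a k.-1 * a k.+1).

Definition stirling_transform (R : realFieldType) (x : nat -> R) (n : nat) : R :=
  \sum_(0 <= k < n.+1) (stirling1 n k)%:R * x k.

From mathcomp Require Import all_boot all_order all_algebra.
From mathcomp Require Import ring lra.
Import Order.TTheory GRing.Theory Num.Theory.
Local Open Scope ring_scope.

(* Since t(t+1)...(t+n-1) = \sum_k c(n,k) t^k, z_n is the umbral evaluation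
   (t^k |-> x_k) of the rising factorial.  Multiplying a polynomial by t + a
   acts on sequences as y |-> (y_{m+1} + a y_m)_m, which preserves
   log-convexity for a >= 0: shifts, nonnegative multiples and sums of
   log-convex sequences are log-convex.  Peeling off the first factor t + a
   turns three consecutive values of the evaluation of (t+a)(t+a+1)... against
   y into three consecutive values of the evaluation of (t+a+1)(t+a+2)...
   against the transformed sequence, so by induction log-convexity of z
   reduces to the inequality (y_1 + a y_0)^2 <= y_0 (y_2 + (2a+1) y_1 + a(a+1) y_0). *)

Lemma stirling1_eq0 n k : (n < k)%N -> stirling1 n k = 0%N.
Proof.
elim: n k => [|n IH] [|k] //= ltnk.
by rewrite !IH ?muln0 // ltnW.
Qed.

Lemma ler_sqrD_mulD (R : realDomainType) (a b c d e f : R) :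
  0 <= a -> 0 <= b -> 0 <= c -> 0 <= d -> 0 <= e -> 0 <= f ->
  b ^+ 2 <= a * c -> e ^+ 2 <= d * f -> (b + e) ^+ 2 <= (a + d) * (c + f).
Proof.
move=> a0 b0 c0 d0 e0 f0 bac edf.
have cross_sq : (b * e) ^+ 2 <= (a * f) * (d * c).
  rewrite exprMn (_ : a * f * (d * c) = (a * c) * (d * f)); last by ring.
  by apply: ler_pM; rewrite ?sqr_ge0.
have cross : 2 * (b * e) <= a * f + d * c.
  rewrite -(@ler_pXn2r _ 2%N) // ?nnegrE ?addr_ge0 ?mulr_ge0 //.
  have := sqr_ge0 (a * f - d * c); nra.
nra.
Qed.

Section LogConvex.
Variable R : realFieldType.
Implicit Types (a : R) (x y : nat -> R).

Lemma log_convexE y :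
  log_convex y <-> (forall k, 0 <= y k) /\ (forall k, y k.+1 ^+ 2 <= y k * y k.+2).
Proof.
split=> -[y0 ylc]; split=> //.
- by move=> k; apply: ylc.
- by case.
Qed.

Lemma log_convex_shift y : log_convex y -> log_convex (fun m => y m.+1).
Proof. by move=> /log_convexE[y0 ylc]; apply/log_convexE. Qed.

Lemma log_convexZ a y : 0 <= a -> log_convex y -> log_convex (fun m => a * y m).
Proof.
move=> a0 /log_convexE[y0 ylc]; apply/log_convexE; split=> k; first exact: mulr_ge0.
rewrite exprMn (_ : a * y k * (a * y k.+2) = a ^+ 2 * (y k * y k.+2)); last by ring.
by rewrite ler_wpM2l ?sqr_ge0.
Qed.

Lemma log_convexD y1 y2 :
  log_convex y1 -> log_convex y2 -> log_convex (fun m => y1 m + y2 m).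
Proof.
move=> /log_convexE[y10 y1lc] /log_convexE[y20 y2lc].
by apply/log_convexE; split=> k; [exact: addr_ge0 | exact: ler_sqrD_mulD].
Qed.

(* Multiplication of a polynomial by t + a, on its umbral image y. *)
Definition umbral_shift a y : nat -> R := fun m => y m.+1 + a * y m.

Lemma log_convex_umbral_shift a y :
  0 <= a -> log_convex y -> log_convex (umbral_shift a y).
Proof.
move=> a0 ylc; apply: log_convexD; first exact: log_convex_shift.
exact: log_convexZ.
Qed.

(* Umbral evaluation (t^k |-> y k) of (t+a)(t+a+1)...(t+a+n-1). *)
Fixpoint umbral_rising a (n : nat) y : R :=
  if n is n'.+1 then umbral_rising (a + 1) n' (umbral_shift a y) else y 0%N.

Lemma eq_umbral_rising n a y1 y2 :
  y1 =1 y2 -> umbral_rising a n y1 = umbral_rising a n y2.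
Proof.
elim: n a y1 y2 => [|n IH] a y1 y2 y12 /=; first exact: y12.
by apply: IH => m; rewrite /umbral_shift !y12.
Qed.

Lemma umbral_risingSr n a y :
  umbral_rising a n.+1 y = umbral_rising a n (umbral_shift (a + n%:R) y).
Proof.
elim: n a y => [|n IH] a y; first by rewrite /= addr0.
change (umbral_rising (a + 1) n.+1 (umbral_shift a y)
  = umbral_rising (a + 1) n (umbral_shift a (umbral_shift (a + n.+1%:R) y))).
rewrite IH; apply: eq_umbral_rising => m.
by rewrite /umbral_shift -natr1; ring.
Qed.

Lemma log_convex_umbral_rising a y :
  0 <= a -> log_convex y -> log_convex (fun n => umbral_rising a n y).
Proof.
move=> a0 ylc; apply/log_convexE; split=> n.
  elim: n a y a0 ylc => [|n IH] a y a0 ylc /=.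
    by case/log_convexE: ylc.
  by apply: IH; [rewrite addr_ge0 | exact: log_convex_umbral_shift].
elim: n a y a0 ylc => [|n IH] a y a0 ylc.
  case/log_convexE: ylc => y0 ylc.
  have := y0 0%N; have := y0 1%N; have := ylc 0%N.
  rewrite /= /umbral_shift; nra.
by apply: IH; [rewrite addr_ge0 | exact: log_convex_umbral_shift].
Qed.

Lemma stirling_transform_widen x n N : (n < N)%N ->
  stirling_transform x n = \sum_(k < N) (stirling1 n k)%:R * x k.
Proof.
move=> ltnN; rewrite /stirling_transform big_mkord.
rewrite (big_ord_widen N (fun k => (stirling1 n k)%:R * x k) ltnN) big_mkcond /=.
apply: eq_bigr => k _; case: ltnP => // leq_nk.
by rewrite stirling1_eq0 // mul0r.
Qed.

Lemma stirling_transformS x n :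
  stirling_transform x n.+1
  = n%:R * stirling_transform x n + stirling_transform (fun m => x m.+1) n.
Proof.
rewrite (@stirling_transform_widen x n.+1 n.+2) //.
rewrite (@stirling_transform_widen x n n.+2) // (@stirling_transform_widen _ n n.+1) //.
rewrite big_ord_recl [X in _ = _ * X + _]big_ord_recl /= mul0r add0r mulrDr.
have -> : n%:R * ((stirling1 n 0)%:R * x 0%N) = 0.
  by case: n => [|n]; rewrite /= ?mulr0n ?mul0r ?mulr0.
rewrite add0r mulr_sumr -big_split /=; apply: eq_bigr => i _.
by rewrite natrD natrM; ring.
Qed.

Lemma stirling_transform_umbral x n :
  stirling_transform x n = umbral_rising 0 n x.
Proof.
elim: n x => [|n IH] x; first by rewrite /stirling_transform big_nat1 mul1r.
rewrite stirling_transformS umbral_risingSr add0r -IH /stirling_transform.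
rewrite mulr_sumr -big_split /=; apply: eq_bigr => i _.
by rewrite /umbral_shift; ring.
Qed.

End LogConvex.

Theorem mainTheorem3 (R : realFieldType) (x : nat -> R) :
  @log_convex R x -> @log_convex R (@stirling_transform R x).
Proof.
move=> xlc; have /log_convexE[z0 zlc] := @log_convex_umbral_rising R 0 x (lexx 0) xlc.
apply/log_convexE; split=> [n|n]; rewrite !stirling_transform_umbral.
- exact: z0.
- exact: zlc.
Qed.
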